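(* Let $p\ge 1$ be an integer and let $0<u\le v$ be real numbers with $uv=1$. Let $\mathcal{C}=\{A\in\mathbb{S}_{++}^p : uI_p\preceq A\preceq vI_p\}$. Then for every $\Omega_r\in\mathcal{C}$, \[ \mathcal{N}_{\mathcal{C}}(\Omega_r) = -\mathcal{N}_{\mathcal{C}}(\Omega_r^{-1}), \] where for $A\in\mathcal{C}$ the normal cone is $\mathcal{N}_{\mathcal{C}}(A)=\{B\in\mathbb{S}^p : \operatorname{tr}(B^T(Z-A))\le 0 \text{ for all } Z\in\mathcal{C}\}$.
   Context: $\mathbb{S}^p$ denotes the set of real symmetric $p\times p$ matrices, $\mathbb{S}_{++}^p$ the set of real symmetric positive definite $p\times p$ matrices, and $\preceq$ the Loewner order ($A\preceq B$ iff $B-A$ is positive semidefinite). For a set $S$ of matrices, $-S=\{-B : B\in S\}$. Note that $\Omega_r\in\mathcal{C}$ implies $\Omega_r^{-1}\in\mathcal{C}$ since $uv=1$. *)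

From mathcomp Require Import all_boot all_order all_algebra.
Set Implicit Arguments. Unset Strict Implicit. Unset Printing Implicit Defensive.
Import Order.TTheory GRing.Theory Num.Theory.
Local Open Scope ring_scope.

Definition symmetric (R : ringType) (p : nat) (A : 'M[R]_p) : Prop := A^T = A.

Definition psd (R : realFieldType) (p : nat) (A : 'M[R]_p) : Prop :=
  symmetric A /\ forall x : 'cV[R]_p, 0 <= (x^T *m A *m x) 0 0.

Definition pd (R : realFieldType) (p : nat) (A : 'M[R]_p) : Prop :=
  symmetric A /\ forall x : 'cV[R]_p, x != 0 -> 0 < (x^T *m A *m x) 0 0.

Definition loewner_le (R : realFieldType) (p : nat) (A B : 'M[R]_p) : Prop :=
  psd (B - A).

Definition Cset (R : realFieldType) (p : nat) (u v : R) (A : 'M[R]_p) : Prop :=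
  pd A /\ loewner_le (u%:M) A /\ loewner_le A (v%:M).

Definition normal_cone (R : realFieldType) (p : nat) (S : 'M[R]_p -> Prop)
  (A : 'M[R]_p) (B : 'M[R]_p) : Prop :=
  symmetric B /\ forall Z, S Z -> \tr (B^T *m (Z - A)) <= 0.

From Pilot Require Import Defs.
From mathcomp Require Import all_boot all_order all_algebra.
From mathcomp Require Import ring.
Set Implicit Arguments. Unset Strict Implicit. Unset Printing Implicit Defensive.
Import Order.TTheory GRing.Theory Num.Theory.
Local Open Scope ring_scope.

(* Put X := Omega^-1 and Y := (u + v) I - Omega. The reflection
   Z |-> (u + v) I - Z maps C onto itself, hence maps N_C(Omega) onto
   -N_C(Y), and it remains to see that N_C(X) = N_C(Y). For this it suffices
   that the segment [X, Y] can be prolonged beyond both of its ends inside C: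
   X + s (X - Y) and Y + s (Y - X) lie in C for s = u^2. All these matrices
   are Laurent polynomials in Omega, so after conjugation by Omega each of the
   four Loewner inequalities becomes the positive semidefiniteness of a
   polynomial in Omega; using uv = 1, that polynomial is a nonnegative
   combination of congruences g f g of Omega, Omega - u, v - Omega and
   (Omega - u)(v - Omega). *)

Section QuadraticForm.
Variables (R : realFieldType) (n : nat).
Implicit Types (M N G : 'M[R]_n) (x y : 'cV[R]_n).

Definition qform M x : R := (x^T *m M *m x) 0 0.

Definition psd_form M := forall x, 0 <= qform M x.

Lemma qformD M N x : qform (M + N) x = qform M x + qform N x.
Proof. by rewrite /qform mulmxDr mulmxDl mxE. Qed.

Lemma qformN M x : qform (- M) x = - qform M x.
Proof. by rewrite /qform mulmxN mulNmx mxE. Qed.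

Lemma qformZ a M x : qform (a *: M) x = a * qform M x.
Proof. by rewrite /qform -scalemxAr -scalemxAl mxE. Qed.

Lemma qform_scalar a x : qform a%:M x = a * qform 1%:M x.
Proof. by rewrite -qformZ scale_scalar_mx mulr1. Qed.

Lemma qform_congr G M x : qform (G^T *m M *m G) x = qform M (G *m x).
Proof. by rewrite /qform trmx_mul !mulmxA. Qed.

Lemma qform1_gt0 x : x != 0 -> 0 < qform 1%:M x.
Proof.
move=> x0; rewrite /qform mulmx1 mxE.
under eq_bigr => i _ do rewrite mxE -expr2.
rewrite lt_def sumr_ge0 => [|i _]; last exact: sqr_ge0.
rewrite andbT; apply: contra x0 => /eqP/psumr_eq0P sum0.
apply/eqP/matrixP => i j; rewrite ord1 mxE.
by apply/eqP; rewrite -sqrf_eq0 sum0 => // k _; apply: sqr_ge0.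
Qed.

Lemma qform_polar M x y : M^T = M ->
  qform M (x + y) = qform M x + qform M y + 2 * (x^T *m M *m y) 0 0.
Proof.
move=> sM; have yMx : y^T *m M *m x = (x^T *m M *m y)^T.
  by rewrite !trmx_mul trmxK sM mulmxA.
rewrite /qform mulmxDr [(x + y)^T]linearD /= !mulmxDl yMx !mxE; ring.
Qed.

Lemma qform_eq0 M : M^T = M -> (forall x, qform M x = 0) -> M = 0.
Proof.
move=> sM M0; apply/matrixP => i j; rewrite mxE.
have := qform_polar (delta_mx i 0) (delta_mx j 0) sM.
rewrite !M0 !add0r trmx_delta -rowE -colE !mxE => /esym/eqP.
by rewrite mulf_eq0 pnatr_eq0 => /eqP.
Qed.

Lemma pd_unitmx M : pd M -> M \in unitmx.
Proof.
move=> [_ pdM]; rewrite unitmxE unitfE; apply/negP => /det0P [w w0 wM].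
by move: (pdM w^T); rewrite trmx_eq0 trmxK wM mul0mx mxE ltxx => /(_ w0).
Qed.

End QuadraticForm.

Lemma Cset_intro (R : realFieldType) n (u v : R) (M : 'M[R]_n) : 0 < u ->
  M^T = M -> psd_form (M - u%:M) -> psd_form (v%:M - M) -> Cset u v M.
Proof.
move=> u_gt0 sM lbM ubM.
split; last by split; split=> //; rewrite /Defs.symmetric linearB /= tr_scalar_mx sM.
split=> // x x0; rewrite -[M](subrK u%:M); change (0 < qform (M - u%:M + u%:M) x).
by rewrite qformD qform_scalar ltr_wpDl // mulr_gt0 // qform1_gt0.
Qed.

Lemma Cset_reflect (R : realFieldType) n (u v : R) (Z : 'M[R]_n) : 0 < u ->
  Cset u v Z -> Cset u v ((u + v)%:M - Z).
Proof.
move=> u_gt0 [[sZ _] [[_ lbZ] [_ ubZ]]]; apply: Cset_intro => //.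
- by rewrite linearB /= tr_scalar_mx sZ.
- by rewrite [(u + v)%:M]raddfD addrAC [u%:M + _]addrC addrK.
- by rewrite [(u + v)%:M]raddfD opprB addrC opprD addrA subrK.
Qed.

Lemma normal_cone_reflect (R : realFieldType) n (S : 'M[R]_n -> Prop) (C A B : 'M[R]_n) :
  (forall Z, S Z -> S (C - Z)) -> normal_cone S A B -> normal_cone S (C - A) (- B).
Proof.
move=> SC [sB NB]; split; first by rewrite /Defs.symmetric linearN /= sB.
move=> Z SZ; have := NB _ (SC Z SZ).
by rewrite linearN /= mulNmx -mulmxN opprB addrAC.
Qed.

(* Split Z - Y = (Z - X) + (X - Y); the second term is a positive multiple of
   a direction from X into S. *)
Lemma normal_cone_prolong (R : realFieldType) n (S : 'M[R]_n -> Prop) (X Y : 'M[R]_n) (s : R) :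
  0 < s -> S (X + s *: (X - Y)) -> forall B, normal_cone S X B -> normal_cone S Y B.
Proof.
move=> s_gt0 SW B [sB NB]; split=> // Z SZ.
have NXY : \tr (B^T *m (X - Y)) <= 0.
  by have := NB _ SW; rewrite addrC addKr -scalemxAr mxtraceZ pmulr_rle0.
rewrite -(subrK X Z) -addrA mulmxDr mxtraceD.
by have := lerD (NB _ SZ) NXY; rewrite addr0.
Qed.

Section PolynomialsOfSymmetricMatrix.
Variables (R : realFieldType) (n : nat) (O : 'M[R]_n.+1).
Hypothesis sO : O^T = O.

Lemma horner_mx_tr g : (horner_mx O g)^T = horner_mx O g.
Proof.
elim/poly_ind: g => [|g c IHg]; first by rewrite rmorph0 trmx0.
rewrite rmorphD rmorphM /= horner_mx_X horner_mx_C linearD /= tr_scalar_mx.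
by rewrite -mulmxE trmx_mul IHg sO -(comm_mx_horner g (erefl (O *m O))).
Qed.

Definition psd_at f := psd_form (horner_mx O f).

Lemma psd_atD f g : psd_at f -> psd_at g -> psd_at (f + g).
Proof. by move=> Pf Pg x; rewrite rmorphD qformD addr_ge0. Qed.

Lemma psd_atZ a f : 0 <= a -> psd_at f -> psd_at (a%:P * f).
Proof.
by move=> a_ge0 Pf x; rewrite rmorphM /= horner_mx_C -mulmxE mul_scalar_mx qformZ mulr_ge0.
Qed.

Lemma psd_at_congr g f : psd_at f -> psd_at (g * f * g).
Proof.
by move=> Pf x; rewrite !rmorphM /= -!mulmxE -{1}horner_mx_tr qform_congr.
Qed.

Lemma psd_at1 : psd_at 1.
Proof.
by move=> x; rewrite rmorph1 /qform mulmx1 mxE sumr_ge0 // => i _; rewrite mxE -expr2 sqr_ge0.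
Qed.

(* For u < v this is (v - u) L1 L2 = L1 L2 L1 + L2 L1 L2 with L1 = X - u and
   L2 = v - X; for u = v the matrix L1(O) is both positive and negative
   semidefinite, hence zero. *)
Lemma psd_at_interval (u v : R) : u <= v ->
  psd_at ('X - u%:P) -> psd_at (v%:P - 'X) -> psd_at (('X - u%:P) * (v%:P - 'X)).
Proof.
move=> le_uv P1; have [<- P2|neq_uv P2] := eqVneq u v.
  have L0 : horner_mx O ('X - u%:P) = 0.
    apply: qform_eq0 => [|x]; first exact: horner_mx_tr.
    apply/eqP; rewrite eq_le P1 andbT -oppr_ge0 -qformN -rmorphN opprB; exact: P2.
  by move=> x; rewrite rmorphM /= L0 mul0r /qform mulmx0 mul0mx mxE.
have uv_gt0 : 0 < v - u by rewrite subr_gt0 lt_neqAle neq_uv.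
have -> : ('X - u%:P) * (v%:P - 'X) = (v - u)^-1%:P * ((v - u)%:P * (('X - u%:P) * (v%:P - 'X))).
  by rewrite mulrA -polyCM mulVf ?mul1r // gt_eqF.
apply: psd_atZ; first by rewrite invr_ge0 ltW.
rewrite (_ : (v - u)%:P * _ = ('X - u%:P) * (v%:P - 'X) * ('X - u%:P)
                     + (v%:P - 'X) * ('X - u%:P) * (v%:P - 'X)); last by ring.
by apply: psd_atD; apply: psd_at_congr.
Qed.

Hypothesis uO : O \in unitmx.

Definition laurent_mx a g := a *: invmx O + horner_mx O g.

Lemma laurent_mxD a g b h : laurent_mx a g + laurent_mx b h = laurent_mx (a + b) (g + h).
Proof. by rewrite /laurent_mx rmorphD scalerDl addrACA. Qed.

Lemma laurent_mxB a g b h : laurent_mx a g - laurent_mx b h = laurent_mx (a - b) (g - h).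
Proof. by rewrite /laurent_mx rmorphB scalerBl opprD addrACA. Qed.

Lemma laurent_mxZ r a g : r *: laurent_mx a g = laurent_mx (r * a) (r%:P * g).
Proof. by rewrite /laurent_mx scalerDr scalerA rmorphM /= horner_mx_C -mulmxE mul_scalar_mx. Qed.

Lemma scalar_laurent_mx c : c%:M = laurent_mx 0 c%:P.
Proof. by rewrite /laurent_mx scale0r add0r horner_mx_C. Qed.

Lemma laurent_mx_tr a g : (laurent_mx a g)^T = laurent_mx a g.
Proof. by rewrite /laurent_mx linearD /= linearZ /= trmx_inv sO horner_mx_tr. Qed.

Lemma laurent_mx_psd a g f :
  a%:P * 'X + 'X * g * 'X = f -> psd_at f -> psd_form (laurent_mx a g).
Proof.
move=> <- Pf x; rewrite -[x](mul1mx x) -(mulmxV uO) -mulmxA -qform_congr sO.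
rewrite (_ : O *m _ *m O = horner_mx O (a%:P * 'X + 'X * g * 'X)); first exact: Pf.
rewrite /laurent_mx mulmxDr mulmxDl -scalemxAr -scalemxAl mulmxV // mul1mx.
by rewrite rmorphD !rmorphM /= horner_mx_C horner_mx_X -!mulmxE mul_scalar_mx.
Qed.

Lemma Cset_laurent_mx (u v : R) a g f1 f2 : 0 < u ->
  a%:P * 'X + 'X * (g - u%:P) * 'X = f1 -> psd_at f1 ->
  (- a)%:P * 'X + 'X * (v%:P - g) * 'X = f2 -> psd_at f2 ->
  Cset u v (laurent_mx a g).
Proof.
move=> u_gt0 e1 P1 e2 P2; apply: Cset_intro => //; first exact: laurent_mx_tr.
  by rewrite scalar_laurent_mx laurent_mxB subr0; exact: laurent_mx_psd e1 P1.
by rewrite scalar_laurent_mx laurent_mxB sub0r; exact: laurent_mx_psd e2 P2.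
Qed.

End PolynomialsOfSymmetricMatrix.

Section ProlongedSegment.
Variables (R : realFieldType) (n : nat) (O : 'M[R]_n.+1) (u v : R).
Hypotheses (sO : O^T = O) (uO : O \in unitmx).
Hypotheses (u_gt0 : 0 < u) (le_uv : u <= v) (uv1 : u * v = 1).
Hypotheses (lbO : psd_at O ('X - u%:P)) (ubO : psd_at O (v%:P - 'X)).

Local Notation L1 := ('X - u%:P).
Local Notation L2 := (v%:P - 'X).
Local Notation X := (laurent_mx O 1 0).
Local Notation Y := (laurent_mx O 0 ((u + v)%:P - 'X)).

Let upow_ge0 k : 0 <= u ^+ k. Proof. exact/exprn_ge0/ltW. Qed.
Let uvP : u%:P * v%:P = 1 :> {poly R}. Proof. by rewrite -polyCM uv1. Qed.

Let psdX : psd_at O 'X.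
Proof.
rewrite (_ : 'X = L1 + u%:P * 1); last by ring.
exact: psd_atD lbO (psd_atZ (ltW u_gt0) (psd_at1 O)).
Qed.

Let psdL12 : psd_at O (L1 * L2). Proof. exact: psd_at_interval. Qed.

Lemma Cset_prolong_inv : Cset u v (X + u ^+ 2 *: (X - Y)).
Proof.
rewrite laurent_mxB laurent_mxZ laurent_mxD.
apply: (Cset_laurent_mx sO uO
  (f1 := (u ^+ 2)%:P * (L2 * 'X * L2) + (u ^+ 3)%:P * (L1 * L2) + (u ^+ 4)%:P * L2)
  (f2 := v%:P * (L1 * 1 * L1) + L1 + (u ^+ 2)%:P * (L1 * L2 * L1)
         + (u ^+ 3)%:P * (L1 * L2))) => //; try by ring: uvP.
  apply: psd_atD; first apply: psd_atD.
  - exact: psd_atZ (upow_ge0 _) (psd_at_congr sO _ psdX).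
  - exact: psd_atZ (upow_ge0 _) psdL12.
  - exact: psd_atZ (upow_ge0 _) ubO.
apply: psd_atD; first apply: psd_atD; first apply: psd_atD.
- exact: psd_atZ (ltW (lt_le_trans u_gt0 le_uv)) (psd_at_congr sO _ (psd_at1 O)).
- exact: lbO.
- exact: psd_atZ (upow_ge0 _) (psd_at_congr sO _ ubO).
- exact: psd_atZ (upow_ge0 _) psdL12.
Qed.

Lemma Cset_prolong_refl : Cset u v (Y + u ^+ 2 *: (Y - X)).
Proof.
rewrite laurent_mxB laurent_mxZ laurent_mxD.
apply: (Cset_laurent_mx sO uO
  (f1 := 'X * L2 * 'X + (u ^+ 2)%:P * (L1 * L2 * L1) + (u ^+ 3)%:P * (L1 * L2))
  (f2 := L1 * 'X * L1 + (u ^+ 2)%:P * ('X * L1 * 'X))) => //; try by ring: uvP.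
  apply: psd_atD; first apply: psd_atD.
  - exact: (psd_at_congr sO 'X ubO).
  - exact: psd_atZ (upow_ge0 _) (psd_at_congr sO _ ubO).
  - exact: psd_atZ (upow_ge0 _) psdL12.
exact: psd_atD (psd_at_congr sO _ psdX) (psd_atZ (upow_ge0 _) (psd_at_congr sO _ lbO)).
Qed.

Lemma normal_cone_inv_refl B :
  normal_cone (Cset u v) X B <-> normal_cone (Cset u v) Y B.
Proof.
have s_gt0 : 0 < u ^+ 2 by rewrite exprn_gt0.
split; [exact: normal_cone_prolong s_gt0 Cset_prolong_inv B
       | exact: normal_cone_prolong s_gt0 Cset_prolong_refl B].
Qed.

End ProlongedSegment.

Theorem lemma1 (R : realFieldType) (p : nat) (u v : R)
  (hp : (1 <= p)%N) (hu : 0 < u) (huv : u <= v) (h1 : u * v = 1)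
  (Omega : 'M[R]_p) (hO : Cset u v Omega) :
  forall B : 'M[R]_p,
    normal_cone (Cset u v) Omega B <-> normal_cone (Cset u v) (invmx Omega) (- B).
Proof.
case: p hp Omega hO => [//|n] _ O hO B.
have [[sO pdO] [[_ lbO] [_ ubO]]] := hO.
have psdL1 : psd_at O ('X - u%:P).
  by rewrite /psd_at rmorphB /= horner_mx_X horner_mx_C; exact: lbO.
have psdL2 : psd_at O (v%:P - 'X).
  by rewrite /psd_at rmorphB /= horner_mx_X horner_mx_C; exact: ubO.
have NXY := normal_cone_inv_refl sO (pd_unitmx (conj sO pdO)) hu huv h1 psdL1 psdL2.
have eX : invmx O = laurent_mx O 1 0 by rewrite /laurent_mx scale1r rmorph0 addr0.
have eY : (u + v)%:M - O = laurent_mx O 0 ((u + v)%:P - 'X).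
  by rewrite /laurent_mx scale0r add0r rmorphB /= horner_mx_C horner_mx_X.
have reflC (Z : 'M[R]_n.+1) : Cset u v Z -> Cset u v ((u + v)%:M - Z) by exact: Cset_reflect.
split=> NB.
  by rewrite eX NXY -eY; exact: normal_cone_reflect reflC NB.
rewrite -[O](subKr (u + v)%:M) -[B]opprK; apply: normal_cone_reflect => //.
by rewrite eY -NXY -eX.
Qed.
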